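(* Assume $\mathsf{CH}$. There is a strongly tight MAD family $\mathcal{A}$ with $\mathcal{A}\subseteq\mathcal{J}_{1/n}$ (in particular, $\mathcal{A}$ is random destructible and not Laflamme).
   Context: A MAD family is a maximal family of infinite subsets of $\omega$ with pairwise finite intersections; $\mathcal{I}(\mathcal{A})$ is the ideal generated by $\mathcal{A}$ and the finite sets. The summable ideal is $\mathcal{J}_{1/n}=\{A\subseteq\omega:\sum_{n\in A}\frac1{n+1}<\infty\}$. An ideal $\mathcal{I}$ is strongly tight if for every $\{X_n:n\in\omega\}\subseteq[\omega]^\omega$ such that $\{n:X_n\subseteq^*Y\}$ is finite for every $Y\in\mathcal{I}$, there is $A\in\mathcal{I}$ meeting every $X_n$; $\mathcal{A}$ is strongly tight if $\mathcal{I}(\mathcal{A})$ is. $\mathcal{A}$ is random destructible if forcing with random forcing (below some condition) makes $\mathcal{A}$ no longer maximal. $\mathcal{A}$ is Laflamme if $\mathcal{I}(\mathcal{A})$ cannot be extended to an $F_\sigma$ ideal. *)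

(* Subsets of omega are represented as characteristic
   functions nat -> bool; families of subsets as predicates on them. *)
From Stdlib Require Import Reals Lra Lia Arith List Bool.
Open Scope R_scope.

Definition Sub := nat -> bool.

Definition inter (X Y : Sub) : Sub := fun n => X n && Y n.
Definition union (X Y : Sub) : Sub := fun n => X n || Y n.
Definition emptyS : Sub := fun _ => false.
Definition fullS : Sub := fun _ => true.
Definition union_list (l : list Sub) : Sub := fold_right union emptyS l.
Definition subsetS (X Y : Sub) : Prop := forall n, X n = true -> Y n = true.

Definition finiteS (X : Sub) : Prop := exists m, forall n, X n = true -> (n < m)%nat.
Definition infiniteS (X : Sub) : Prop := ~ finiteS X.
Definition finiteP (P : nat -> Prop) : Prop := exists m, forall n, P n -> (n < m)%nat.

Definition almost_subset (X Y : Sub) : Prop :=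
  finiteS (fun n => X n && negb (Y n)).

Definition AD_family (A : Sub -> Prop) : Prop :=
  (forall X, A X -> infiniteS X) /\
  (forall X Y, A X -> A Y -> X <> Y -> finiteS (inter X Y)).

Definition MAD (A : Sub -> Prop) : Prop :=
  AD_family A /\
  (forall B : Sub -> Prop, AD_family B -> (forall X, A X -> B X) -> forall X, B X -> A X).

Definition gen_ideal (A : Sub -> Prop) (Y : Sub) : Prop :=
  exists l : list Sub, Forall A l /\ almost_subset Y (union_list l).

Definition strongly_tight_ideal (I : Sub -> Prop) : Prop :=
  forall Xs : nat -> Sub,
    (forall n, infiniteS (Xs n)) ->
    (forall Y, I Y -> finiteP (fun n => almost_subset (Xs n) Y)) ->
    exists A, I A /\ forall n, exists k, A k = true /\ Xs n k = true.

Definition strongly_tight (A : Sub -> Prop) : Prop := strongly_tight_ideal (gen_ideal A).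

Fixpoint psum (A : Sub) (N : nat) : R :=
  match N with
  | O => 0
  | S N' => psum A N' + (if A N' then / INR (S N') else 0)
  end.

Definition summable (A : Sub) : Prop := exists M : R, forall N, psum A N <= M.

Definition is_ideal (J : Sub -> Prop) : Prop :=
  (forall X Y, J Y -> subsetS X Y -> J X) /\
  (forall X Y, J X -> J Y -> J (union X Y)) /\
  (forall X, finiteS X -> J X) /\
  ~ J fullS.

(* closed sets in the Cantor-space topology on P(omega) = 2^omega *)
Definition closedS (C : Sub -> Prop) : Prop :=
  forall f, ~ C f -> exists n, forall g, (forall i, (i < n)%nat -> g i = f i) -> ~ C g.

Definition F_sigma (J : Sub -> Prop) : Prop :=
  exists C : nat -> (Sub -> Prop), (forall k, closedS (C k)) /\
    forall X, J X <-> exists k, C k X.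

Definition Laflamme (A : Sub -> Prop) : Prop :=
  ~ exists J, is_ideal J /\ F_sigma J /\ (forall Y, gen_ideal A Y -> J Y).

Definition CH : Prop :=
  forall X : Sub -> Prop,
    (exists f : nat -> Sub, forall x, X x -> exists n, f n = x) \/
    (exists g : Sub -> Sub, (forall x, X (g x)) /\
       (forall x y, g x = g y -> x = y) /\
       (forall y, X y -> exists x, g x = y)).

From Pilot Require Import Defs.
From Stdlib Require Import Reals Lra Lia List Bool.
From Stdlib Require Import Classical ClassicalEpsilon FunctionalExtensionality.
From Stdlib Require Import Cantor Inverse_Image.
From mathcomp Require eqtype boolp wochoice.
Open Scope R_scope.

(* Under CH, well-order P(omega) so that every set has only countably many
   predecessors; every t in P(omega) also codes a sequence (X_n) of subsets of
   omega.  By recursion along the order build sets A_t: if B_0, B_1, ... are the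
   sets built before t, the X_n coded by t are infinite, and each finite union
   B_0 u ... u B_(m-1) almost contains only finitely many X_n, then pick
   a_n in X_n with a_n >= 2^n and a_n outside every B_k (k < n) that does not
   almost contain X_n, and put A_t = {a_n}.  Since sum 1/(a_n+1) <= sum 2^-n,
   A_t is summable; it meets every X_n; and for fixed k only the finitely many n
   with X_n almost contained in B_0 u ... u B_k can have a_n in B_k, so A_t is
   almost disjoint from B_k.  The infinite A_t form an almost disjoint family,
   strongly tight because every sequence (X_n) is coded by some t, and strong
   tightness forces maximality.  Finally I(A) lies in the summable ideal, a
   proper F_sigma ideal, so A is not Laflamme. *)

(** * Finite sets and the ideal generated by a family *)

Ltac pointwise :=
  let n := fresh "n" in
  intros n; simpl in *; unfold subsetS, inter, union, emptyS in *; simpl in *;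
  repeat match goal with |- context [?f n] => destruct (f n) end;
  simpl; intros; congruence.

Definition decide (P : Prop) : bool :=
  if excluded_middle_informative P then true else false.

Lemma decide_spec (P : Prop) : decide P = true <-> P.
Proof.
  unfold decide. destruct (excluded_middle_informative P); split; congruence || tauto.
Qed.

Lemma finiteS_sub X Y : finiteS Y -> subsetS X Y -> finiteS X.
Proof. intros [m Hm] XY. exists m. intros n Xn. apply Hm, XY, Xn. Qed.

Lemma finiteS_union X Y : finiteS X -> finiteS Y -> finiteS (union X Y).
Proof.
  intros [m Hm] [m' Hm']. exists (m + m')%nat. intros n XYn.
  apply orb_true_iff in XYn as [Xn|Yn]; [specialize (Hm _ Xn)|specialize (Hm' _ Yn)]; lia.
Qed.

Lemma finiteS_empty : finiteS emptyS.
Proof. exists 0%nat. discriminate. Qed.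

Lemma infiniteS_unbounded X : infiniteS X -> forall b, exists k, X k = true /\ (b <= k)%nat.
Proof.
  intros Xinf b. apply NNPP. intro bounded. apply Xinf. exists b. intros n Xn.
  apply Nat.nle_gt. intro le. apply bounded. exists n. auto.
Qed.

Lemma infiniteS_not_almost_subset X Y :
  infiniteS X -> finiteS (inter X Y) -> ~ almost_subset X Y.
Proof.
  intros Xinf XYfin XY. apply Xinf.
  apply (finiteS_sub _ (union (fun n => X n && negb (Y n)) (inter X Y))).
  - apply finiteS_union; assumption.
  - pointwise.
Qed.

Lemma image_lt_bounded (a : nat -> nat) c : exists b, forall n, (n < c)%nat -> (a n < b)%nat.
Proof.
  induction c as [|c [b Hb]]; [exists 0%nat; lia|].
  exists (Nat.max b (S (a c))). intros n hn.
  destruct (Nat.eq_dec n c) as [->|ne]; [lia|]. specialize (Hb n ltac:(lia)). lia.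
Qed.

Lemma union_list_app l l' n : union_list (l ++ l') n = union_list l n || union_list l' n.
Proof.
  induction l as [|Z l IH]; [reflexivity|]. simpl. unfold union at 1 2. rewrite IH.
  apply orb_assoc.
Qed.

Lemma gen_ideal_mem A Y : A Y -> gen_ideal A Y.
Proof.
  intro AY. exists (Y :: nil). split; [repeat constructor; assumption|].
  apply (finiteS_sub _ emptyS); [apply finiteS_empty|]. pointwise.
Qed.

Lemma gen_ideal_finite A Y : finiteS Y -> gen_ideal A Y.
Proof.
  intro Yfin. exists nil. split; [constructor|].
  apply (finiteS_sub _ Y); [assumption|]. pointwise.
Qed.

Lemma gen_ideal_mem_or_finite A Y : (infiniteS Y -> A Y) -> gen_ideal A Y.
Proof.
  intro H. destruct (classic (finiteS Y)) as [fin|inf].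
  - apply gen_ideal_finite, fin.
  - apply gen_ideal_mem, H, inf.
Qed.

Lemma gen_ideal_union A Y Z : gen_ideal A Y -> gen_ideal A Z -> gen_ideal A (union Y Z).
Proof.
  intros [l [Al HY]] [l' [Al' HZ]]. exists (l ++ l'). split; [apply Forall_app; auto|].
  apply (finiteS_sub _ (union (fun n => Y n && negb (union_list l n))
                              (fun n => Z n && negb (union_list l' n)))).
  - apply finiteS_union; assumption.
  - intros n. rewrite union_list_app. revert n. pointwise.
Qed.

Lemma finite_inter_gen_ideal A X Y :
  (forall Z, A Z -> finiteS (inter X Z)) -> gen_ideal A Y -> finiteS (inter X Y).
Proof.
  intros XA [l [Al HY]].
  assert (Xl : finiteS (inter X (union_list l))).
  { clear HY. induction Al as [|Z l AZ Al IH]; simpl.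
    - apply (finiteS_sub _ emptyS); [apply finiteS_empty|]. pointwise.
    - apply (finiteS_sub _ (union (inter X Z) (inter X (union_list l)))).
      + apply finiteS_union; auto.
      + pointwise. }
  apply (finiteS_sub _ (union (inter X (union_list l))
                              (fun n => Y n && negb (union_list l n)))).
  - apply finiteS_union; assumption.
  - pointwise.
Qed.

(** * The summable ideal *)

Lemma psum_term_bounds (X : Sub) (N : nat) : 0 <= (if X N then / INR (S N) else 0) <= 1.
Proof.
  destruct (X N); [|lra]. rewrite S_INR. pose proof (pos_INR N).
  split; [left; apply Rinv_0_lt_compat; lra|].
  rewrite <- Rinv_1. apply Rinv_le_contravar; lra.
Qed.

Lemma psum_mono X Y N :
  (forall x, (x < N)%nat -> X x = true -> Y x = true) -> psum X N <= psum Y N.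
Proof.
  induction N as [|N IH]; intro XY; cbn [psum]; [lra|].
  assert (psum X N <= psum Y N) by (apply IH; intros; apply XY; auto; lia).
  pose proof (psum_term_bounds Y N).
  destruct (X N) eqn:XN; [rewrite (XY N) by (auto; lia)|]; lra.
Qed.

Lemma psum_ext X Y N : (forall x, (x < N)%nat -> X x = Y x) -> psum X N = psum Y N.
Proof.
  induction N as [|N IH]; intro XY; cbn [psum]; [reflexivity|].
  rewrite IH by (intros; apply XY; lia). rewrite (XY N) by lia. reflexivity.
Qed.

Lemma psum_union X Y N : psum (union X Y) N <= psum X N + psum Y N.
Proof.
  induction N as [|N IH]; cbn [psum]; [lra|].
  pose proof (psum_term_bounds X N). pose proof (psum_term_bounds Y N).
  change (union X Y N) with (X N || Y N). destruct (X N), (Y N); cbn [orb]; lra.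
Qed.

Lemma psum_bounded_support X m N :
  (forall x, X x = true -> (x < m)%nat) -> psum X N <= INR (Nat.min N m).
Proof.
  intro Xm. induction N as [|N IH]; cbn [psum]; [simpl; lra|].
  destruct (X N) eqn:XN.
  - specialize (Xm N XN). rewrite Nat.min_l in IH by lia. rewrite Nat.min_l by lia.
    pose proof (psum_term_bounds X N) as term. rewrite XN in term. rewrite S_INR in *. lra.
  - assert (INR (Nat.min N m) <= INR (Nat.min (S N) m)) by (apply le_INR; lia). lra.
Qed.

Lemma psum_singleton c N :
  psum (Nat.eqb c) N = if (c <? N)%nat then / INR (S c) else 0.
Proof.
  induction N as [|N IH]; [reflexivity|]. cbn [psum]. rewrite IH.
  destruct (Nat.eqb_spec c N) as [<-|ne].
  - rewrite Nat.ltb_irrefl, (proj2 (Nat.ltb_lt c (S c))) by lia. lra.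
  - destruct (Nat.ltb_spec c N), (Nat.ltb_spec c (S N)); try lia; lra.
Qed.

Lemma psum_full_add N k :
  (1 <= N)%nat -> psum fullS N + INR k / INR (N + k) <= psum fullS (N + k).
Proof.
  intro N1. induction k as [|k IH].
  - rewrite Nat.add_0_r. unfold Rdiv. rewrite Rmult_0_l. lra.
  - rewrite Nat.add_succ_r. cbn [psum]. unfold fullS in *.
    assert (pos : 0 < INR (N + k)) by (apply lt_0_INR; lia).
    rewrite !S_INR.
    assert (INR k / (INR (N + k) + 1) <= INR k / INR (N + k)).
    { unfold Rdiv. apply Rmult_le_compat_l; [apply pos_INR|]. apply Rinv_le_contravar; lra. }
    replace ((INR k + 1) / (INR (N + k) + 1))
      with (INR k / (INR (N + k) + 1) + / (INR (N + k) + 1)) by (field; lra).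
    lra.
Qed.

Lemma psum_full_pow2 j : INR j / 2 <= psum fullS (2 ^ j).
Proof.
  induction j as [|j IH].
  - simpl. lra.
  - assert (pos : (1 <= 2 ^ j)%nat) by (pose proof (Nat.pow_nonzero 2 j); lia).
    pose proof (psum_full_add (2 ^ j) (2 ^ j) pos) as step.
    replace (2 ^ S j)%nat with (2 ^ j + 2 ^ j)%nat by (simpl; lia).
    assert (0 < INR (2 ^ j)) by (apply lt_0_INR; lia).
    rewrite plus_INR in step.
    replace (INR (2 ^ j) / (INR (2 ^ j) + INR (2 ^ j))) with (1 / 2) in step by (field; lra).
    rewrite S_INR. lra.
Qed.

Lemma summable_sub X Y : summable Y -> subsetS X Y -> summable X.
Proof.
  intros [M HM] XY. exists M. intro N.
  apply (Rle_trans _ (psum Y N)); [apply psum_mono; auto|apply HM].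
Qed.

Lemma summable_union X Y : summable X -> summable Y -> summable (union X Y).
Proof.
  intros [M HM] [M' HM']. exists (M + M'). intro N.
  pose proof (psum_union X Y N). pose proof (HM N). pose proof (HM' N). lra.
Qed.

Lemma summable_finite X : finiteS X -> summable X.
Proof.
  intros [m Hm]. exists (INR m). intro N.
  apply (Rle_trans _ _ _ (psum_bounded_support X m N Hm)). apply le_INR. lia.
Qed.

Lemma summable_almost Y Z : almost_subset Y Z -> summable Z -> summable Y.
Proof.
  intros YZ Zsum. apply (summable_sub _ (union Z (fun n => Y n && negb (Z n)))).
  - apply summable_union; [assumption|apply summable_finite, YZ].
  - pointwise.
Qed.

Lemma not_summable_full : ~ summable fullS.
Proof.
  intros [M HM]. destruct (INR_unbounded (2 * M)) as [j hj].
  pose proof (HM (2 ^ j)%nat). pose proof (psum_full_pow2 j). lra.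
Qed.

Lemma summable_is_ideal : is_ideal summable.
Proof.
  split; [|split; [|split]].
  - intros X Y Ysum XY. exact (summable_sub X Y Ysum XY).
  - apply summable_union.
  - apply summable_finite.
  - apply not_summable_full.
Qed.

Lemma summable_F_sigma : F_sigma summable.
Proof.
  exists (fun k X => forall N, psum X N <= INR k). split.
  - intros k f notC. apply not_all_ex_not in notC as [N HN].
    exists N. intros g gf Cg. apply HN. rewrite (psum_ext f g N); auto.
    intros x hx. symmetry. auto.
  - intro X. split.
    + intros [M HM]. destruct (INR_unbounded M) as [k hk]. exists k. intro N.
      specialize (HM N). lra.
    + intros [k Hk]. exists (INR k). exact Hk.
Qed.

Lemma gen_ideal_summable A Y :
  (forall X, A X -> summable X) -> gen_ideal A Y -> summable Y.
Proof.
  intros Asum [l [Al HY]]. apply (summable_almost _ _ HY). clear HY.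
  induction Al as [|Z l AZ Al IH]; simpl.
  - apply summable_finite, finiteS_empty.
  - apply summable_union; auto.
Qed.

Lemma not_Laflamme_of_summable A : (forall X, A X -> summable X) -> ~ Laflamme A.
Proof.
  intros Asum Laf. apply Laf. exists summable.
  split; [apply summable_is_ideal|split; [apply summable_F_sigma|]].
  intros Y. apply gen_ideal_summable, Asum.
Qed.

(** * Strong tightness implies maximality *)

Definition tail (X : Sub) (m : nat) : Sub := fun k => X k && (m <=? k)%nat.

Lemma tail_infinite X m : infiniteS X -> infiniteS (tail X m).
Proof.
  intros Xinf [b Hb]. destruct (infiniteS_unbounded X Xinf (m + b)) as [k [Xk bk]].
  assert (tail X m k = true) by (unfold tail; rewrite Xk; apply Nat.leb_le; lia).
  specialize (Hb k H). lia.
Qed.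

Lemma MAD_of_AD_strongly_tight A : AD_family A -> strongly_tight A -> MAD A.
Proof.
  intros adA stA. split; [exact adA|].
  intros B adB AB X BX. apply NNPP. intro notAX.
  assert (Xinf : infiniteS X) by (apply (proj1 adB), BX).
  assert (XA : forall Z, A Z -> finiteS (inter X Z)).
  { intros Z AZ. apply (proj2 adB); auto. intros ->. contradiction. }
  (* No tail of X is almost contained in a set of I(A), yet a set of I(A)
     meeting every tail of X meets X infinitely often. *)
  destruct (stA (tail X)) as [Y [IY meets]].
  - intro m. apply tail_infinite, Xinf.
  - intros Y IY. exists 0%nat. intros m tailY. exfalso.
    apply (infiniteS_not_almost_subset (tail X m) Y);
      [apply tail_infinite, Xinf| |exact tailY].
    apply (finiteS_sub _ (inter X Y)); [apply (finite_inter_gen_ideal A); auto|].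
    unfold tail. pointwise.
  - destruct (finite_inter_gen_ideal A X Y XA IY) as [m Hm].
    destruct (meets m) as [k [Yk tailk]]. unfold tail in tailk.
    apply andb_true_iff in tailk as [Xk mk]. apply Nat.leb_le in mk.
    assert (inter X Y k = true) by (unfold inter; rewrite Xk, Yk; reflexivity).
    specialize (Hm k H). lia.
Qed.

(** * A well-order of P(omega) with countable initial segments *)

Definition countableP (P : Sub -> Prop) : Prop :=
  exists e : nat -> Sub, forall x, P x -> exists n, e n = x.

Lemma countableP_preimage (g : Sub -> Sub) P :
  (forall x y, g x = g y -> x = y) -> countableP P -> countableP (fun x => P (g x)).
Proof.
  intros g_inj [e He].
  assert (pre : forall n, exists x, forall y, g y = e n -> x = y).
  { intro n. destruct (classic (exists y, g y = e n)) as [[y gy]|none].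
    - exists y. intros y' gy'. apply g_inj. congruence.
    - exists emptyS. intros y gy. exfalso. eauto. }
  destruct (choice _ pre) as [e' He']. exists e'.
  intros x Px. destruct (He _ Px) as [n en]. exists n. apply He'. symmetry. exact en.
Qed.

Lemma wf_minimal {T : Type} (lt : T -> T -> Prop) (P : T -> Prop) :
  well_founded lt -> (exists x, P x) -> exists z, P z /\ forall y, lt y z -> ~ P y.
Proof.
  intros wf [x Px]. apply NNPP. intro no_min. revert Px.
  induction x as [x IH] using (well_founded_induction wf). intro Px.
  apply no_min. exists x. split; [exact Px|]. intros y yx Py. exact (IH y yx Py).
Qed.

Section WellOrderingPrinciple.
Import eqtype boolp.

Lemma Sub_well_order : exists lt : Defs.Sub -> Defs.Sub -> Prop,
  well_founded lt /\ (forall a b, a <> b -> lt a b \/ lt b a).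
Proof.
  destruct (wochoice.well_ordering_principle (Defs.Sub : eqType)) as [R woR].
  assert (least : forall P : Defs.Sub -> Prop, (exists x, P x) ->
            exists z, P z /\ (forall x, P x -> R z x = true) /\
              forall z', P z' -> (forall x, P x -> R z' x = true) -> z' = z).
  { intros P [x Px].
    destruct (woR (fun y => decide (P y))) as [z [[Pz lb] uniq]].
    - exists x. apply decide_spec, Px.
    - exists z. split; [apply decide_spec, Pz|split].
      + intros y Py. apply lb, decide_spec, Py.
      + intros z' Pz' lb'. symmetry. apply uniq. split; [apply decide_spec, Pz'|].
        intros y Py. apply lb', decide_spec, Py. }
  assert (refl : forall x, R x x = true).
  { intro x. destruct (least (eq x) (ex_intro _ x (Logic.eq_refl x))) as [z [<- [lb _]]].
    auto. }
  exists (fun a b => R b a = false). split.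
  - intro x. apply NNPP. intro notacc.
    destruct (least (fun y => ~ Acc (fun a b => R b a = false) y) (ex_intro _ x notacc))
      as [z [notaccz [lb _]]].
    apply notaccz. constructor. intros y Rzy. apply NNPP. intro notaccy.
    specialize (lb y notaccy). congruence.
  - intros a b ne. apply NNPP. intro both.
    assert (Rba : R b a = true) by (destruct (R b a); tauto).
    assert (Rab : R a b = true) by (destruct (R a b); tauto).
    destruct (least (fun y => y = a \/ y = b) (ex_intro _ a (or_introl (Logic.eq_refl a))))
      as [z [_ [_ uniq]]].
    apply ne.
    rewrite (uniq a), (uniq b); [reflexivity|right; reflexivity| |left; reflexivity|];
      intros y [-> | ->]; auto.
Qed.

End WellOrderingPrinciple.

Lemma CH_countable_segments : CH -> exists lt : Sub -> Sub -> Prop,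
  well_founded lt /\ (forall a b, a <> b -> lt a b \/ lt b a) /\
  (forall t, countableP (fun s => lt s t)).
Proof.
  intro ch. destruct Sub_well_order as [lt0 [wf0 total0]].
  destruct (classic (exists x, ~ countableP (fun s => lt0 s x))) as [unc|allc].
  2: { exists lt0. split; [exact wf0|split; [exact total0|]]. intro t. apply NNPP. eauto. }
  (* Pull the order back along a CH-bijection between P(omega) and the
     predecessors of the least x0 that has uncountably many of them. *)
  destruct (wf_minimal lt0 _ wf0 unc) as [x0 [uncx0 min0]].
  destruct (ch (fun s => lt0 s x0)) as [cnt | [g [g_seg [g_inj _]]]];
    [contradiction (uncx0 cnt)|].
  exists (fun a b => lt0 (g a) (g b)). split; [|split].
  - apply wf_inverse_image, wf0.
  - intros a b ne. apply total0. intro E. apply ne, g_inj, E.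
  - intro b. apply (countableP_preimage g (fun s => lt0 s (g b)) g_inj).
    apply NNPP. exact (min0 (g b) (g_seg b)).
Qed.

(** * Diagonalization *)

Fixpoint unionN (B : nat -> Sub) (m : nat) : Sub :=
  match m with O => emptyS | S m => union (unionN B m) (B m) end.

Lemma unionN_incl B k m x : (k < m)%nat -> B k x = true -> unionN B m x = true.
Proof.
  induction m as [|m IH]; intros km Bkx; [lia|]. simpl. unfold union.
  destruct (Nat.eq_dec k m) as [<-|ne]; [rewrite Bkx; apply orb_true_r|].
  rewrite IH by (auto; lia). reflexivity.
Qed.

Lemma psum_unionN_geometric B m N :
  (forall k, (k < m)%nat -> psum (B k) N <= (/ 2) ^ k) ->
  psum (unionN B m) N <= 2 - 2 * (/ 2) ^ m.
Proof.
  induction m as [|m IH]; intro HB; simpl unionN.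
  - pose proof (psum_bounded_support emptyS 0 N ltac:(discriminate)) as empty.
    rewrite Nat.min_r in empty by lia. simpl in *. lra.
  - pose proof (psum_union (unionN B m) (B m) N).
    assert (psum (unionN B m) N <= 2 - 2 * (/ 2) ^ m) by (apply IH; auto).
    specialize (HB m ltac:(lia)). simpl pow. lra.
Qed.

Definition range (a : nat -> nat) : Sub := fun x => decide (exists n, a n = x).

Lemma summable_range a : (forall n, (2 ^ n <= a n)%nat) -> summable (range a).
Proof.
  intro a_large. exists 2. intro N.
  apply (Rle_trans _ (psum (unionN (fun n => Nat.eqb (a n)) N) N)).
  - apply psum_mono. intros x xN [n <-]%decide_spec.
    apply (unionN_incl _ n); [|apply Nat.eqb_refl].
    pose proof (Nat.pow_gt_lin_r 2 n ltac:(lia)). specialize (a_large n). lia.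
  - apply (Rle_trans _ (2 - 2 * (/ 2) ^ N)); [|pose proof (pow_lt (/ 2) N); lra].
    apply psum_unionN_geometric. intros k _. rewrite psum_singleton.
    destruct (a k <? N)%nat; [|apply pow_le; lra].
    rewrite pow_inv. apply Rinv_le_contravar; [apply pow_lt; lra|].
    replace 2 with (INR 2) by reflexivity. rewrite <- pow_INR. apply le_INR.
    specialize (a_large k). lia.
Qed.

Lemma diagonal_point B Y n b : infiniteS Y ->
  exists a, Y a = true /\ (b <= a)%nat /\
    forall k, (k < n)%nat -> B k a = true -> almost_subset Y (unionN B (S k)).
Proof.
  intro Yinf. induction n as [|n [a [Ya [ba Ha]]]].
  - destruct (infiniteS_unbounded Y Yinf b) as [a [Ya ba]].
    exists a. split; [|split]; auto. intros; lia.
  - destruct (classic (almost_subset Y (unionN B (S n)))) as [covered|uncovered].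
    + exists a. split; [|split]; auto. intros k kn Bka.
      destruct (Nat.eq_dec k n) as [->|ne]; [exact covered|]. apply Ha; auto; lia.
    + destruct (infiniteS_unbounded _ uncovered b) as [a' [Ya' ba']].
      apply andb_true_iff in Ya' as [Ya' notB]. apply negb_true_iff in notB.
      exists a'. split; [|split]; auto. intros k kn Bka'.
      rewrite (unionN_incl B k (S n) a') in notB by auto. discriminate.
Qed.

Lemma diagonalization (B X : nat -> Sub) :
  (forall n, infiniteS (X n)) ->
  (forall m, finiteP (fun n => almost_subset (X n) (unionN B m))) ->
  exists A, summable A /\ (forall k, finiteS (inter A (B k))) /\
    (forall n, exists k, A k = true /\ X n k = true).
Proof.
  intros Xinf Xfin.
  destruct (choice (fun n a => X n a = true /\ (2 ^ n <= a)%nat /\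
     forall k, (k < n)%nat -> B k a = true -> almost_subset (X n) (unionN B (S k))))
    as [a Ha].
  { intro n. apply diagonal_point, Xinf. }
  exists (range a). split; [|split].
  - apply summable_range. intro n. apply Ha.
  - intro k. destruct (Xfin (S k)) as [M HM].
    destruct (image_lt_bounded a (S k + M)) as [b Hb]. exists b.
    intros x [[n <-]%decide_spec Bkx]%andb_true_iff. apply Hb.
    destruct (Nat.lt_ge_cases k n) as [kn|nk]; [|lia].
    specialize (HM n (proj2 (proj2 (Ha n)) k kn Bkx)). lia.
  - intro n. exists (a n). split; [apply decide_spec; eauto|apply Ha].
Qed.

(** * The tower *)

Definition decode (t : Sub) : nat -> Sub := fun n k => t (Cantor.to_nat (n, k)).
Definition encode (Xs : nat -> Sub) : Sub :=
  fun m => let (n, k) := Cantor.of_nat m in Xs n k.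

Lemma decode_encode Xs : decode (encode Xs) = Xs.
Proof.
  apply functional_extensionality; intro n. apply functional_extensionality; intro k.
  unfold decode, encode. rewrite Cantor.cancel_of_to. reflexivity.
Qed.

Definition good_extension (B Xs : nat -> Sub) (A : Sub) : Prop :=
  summable A /\ (forall k, finiteS (inter A (B k))) /\
  ((forall n, infiniteS (Xs n)) ->
   (forall m, finiteP (fun n => almost_subset (Xs n) (unionN B m))) ->
   forall n, exists k, A k = true /\ Xs n k = true).

Lemma good_extension_exists B Xs : exists A, good_extension B Xs A.
Proof.
  destruct (classic ((forall n, infiniteS (Xs n)) /\
                     forall m, finiteP (fun n => almost_subset (Xs n) (unionN B m))))
    as [[Xinf Xfin]|fails].
  - destruct (diagonalization B Xs Xinf Xfin) as [A [Asum [Afin Ameets]]].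
    exists A. split; [|split]; auto.
  - exists emptyS. split; [apply summable_finite, finiteS_empty|split].
    + intro k. apply (finiteS_sub _ emptyS); [apply finiteS_empty|]. pointwise.
    + intros Xinf Xfin. tauto.
Qed.

Section Tower.

Variable lt : Sub -> Sub -> Prop.
Hypothesis lt_wf : well_founded lt.
Variable en : Sub -> nat -> Sub.

Definition earlier (t : Sub) (f : forall s, lt s t -> Sub) (k : nat) : Sub :=
  match excluded_middle_informative (lt (en t k) t) with
  | left p => f (en t k) p
  | right _ => emptyS
  end.

Lemma earlier_lt (g : Sub -> Sub) t k :
  lt (en t k) t -> earlier t (fun s _ => g s) k = g (en t k).
Proof. unfold earlier. destruct (excluded_middle_informative _); tauto. Qed.

Lemma earlier_not_lt (g : Sub -> Sub) t k :
  ~ lt (en t k) t -> earlier t (fun s _ => g s) k = emptyS.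
Proof. unfold earlier. destruct (excluded_middle_informative _); tauto. Qed.

Definition extend (t : Sub) (f : forall s, lt s t -> Sub) : Sub :=
  epsilon (inhabits emptyS) (good_extension (earlier t f) (decode t)).

Definition tower : Sub -> Sub := Fix lt_wf (fun _ => Sub) extend.

Lemma tower_good t : good_extension (earlier t (fun s _ => tower s)) (decode t) (tower t).
Proof.
  unfold tower at 2. rewrite Fix_eq.
  - unfold extend. apply epsilon_spec, good_extension_exists.
  - intros x f g fg. replace g with f; [reflexivity|].
    apply functional_extensionality_dep; intro y.
    apply functional_extensionality_dep; intro p. apply fg.
Qed.

Definition tower_family (X : Sub) : Prop := exists t, X = tower t /\ infiniteS X.

Lemma tower_summable X : tower_family X -> summable X.
Proof. intros [t [-> _]]. apply (tower_good t). Qed.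

Lemma tower_gen_ideal t : gen_ideal tower_family (tower t).
Proof. apply gen_ideal_mem_or_finite. intro inf. exists t. auto. Qed.

Hypothesis lt_total : forall a b, a <> b -> lt a b \/ lt b a.
Hypothesis en_onto : forall t s, lt s t -> exists k, en t k = s.

Lemma tower_almost_disjoint s t : lt s t -> finiteS (inter (tower t) (tower s)).
Proof.
  intro st. destruct (en_onto t s st) as [k <-].
  rewrite <- (earlier_lt tower t k st). apply tower_good.
Qed.

Lemma tower_AD : AD_family tower_family.
Proof.
  split; [intros X [t [_ inf]]; exact inf|].
  intros X Y [s [-> _]] [t [-> _]] ne.
  destruct (lt_total s t) as [st|ts]; [intros ->; contradiction| |].
  - apply (finiteS_sub _ _ (tower_almost_disjoint s t st)). pointwise.
  - apply tower_almost_disjoint, ts.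
Qed.

Lemma tower_strongly_tight : strongly_tight tower_family.
Proof.
  intros Xs Xinf Xfin. set (t := encode Xs).
  assert (earlier_ideal : forall m,
            gen_ideal tower_family (unionN (earlier t (fun s _ => tower s)) m)).
  { induction m as [|m IH]; simpl.
    - apply gen_ideal_finite, finiteS_empty.
    - apply gen_ideal_union; [exact IH|].
      destruct (classic (lt (en t m) t)) as [lt_m|nlt_m].
      + rewrite earlier_lt by exact lt_m. apply tower_gen_ideal.
      + rewrite earlier_not_lt by exact nlt_m. apply gen_ideal_finite, finiteS_empty. }
  destruct (tower_good t) as [_ [_ meets]].
  rewrite (decode_encode Xs : decode t = Xs) in meets.
  exists (tower t). split; [apply tower_gen_ideal|].
  apply meets; [exact Xinf|]. intro m. apply Xfin, earlier_ideal.
Qed.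

End Tower.

Theorem mainTheorem11 :
  CH ->
  exists A : Sub -> Prop,
    MAD A /\ strongly_tight A /\ (forall X, A X -> summable X) /\ ~ Laflamme A.
Proof.
  intro ch. destruct (CH_countable_segments ch) as [lt [lt_wf [lt_total segments]]].
  destruct (choice (fun t e => forall s, lt s t -> exists k, e k = s) segments)
    as [en en_onto].
  exists (tower_family lt lt_wf en).
  assert (sum : forall X, tower_family lt lt_wf en X -> summable X) by apply tower_summable.
  split; [|split; [|split]].
  - apply MAD_of_AD_strongly_tight.
    + apply tower_AD; assumption.
    + apply tower_strongly_tight.
  - apply tower_strongly_tight.
  - exact sum.
  - apply not_Laflamme_of_summable, sum.
Qed.
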